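(* Let $A \in\mathcal{L}_d(\mathcal{Q})$, $A \neq 0$, admit a decomposition \[ A=\sum_{i=1}^t u^{(i)}u^{(i)\top} \] with $u^{(i)}\in\mathbb{F}_2^N$, such that its aggregate assignment is zero: \[ \sum_{i=1}^t u^{(i)}_U=0 \qquad\text{for every }U\in\mathcal{U}_{n,d}. \] Then \[ \operatorname{rank}(A) \ge \binom{d+1}{\lfloor (d+1)/2\rfloor} . \]
   Context: All objects are over $\mathbb{F}_2$. Fix integers $n\ge1$ and $d\ge1$, let $\mathcal{U}_{n,d}:=\{S\subseteq\{0,1,\dots,n\}:1\le|S|\le d\}$ and $N:=|\mathcal{U}_{n,d}|$. Let $\mathcal{Q}$ be a system of quadratic equations over $\mathbb{F}_2$ with zero constant term in the variables $\{y_S:S\in\mathcal{U}_{n,d}\}$, each of the form $\sum_{S,T\in\mathcal{U}_{n,d}} c_{S,T}y_Sy_T+\sum_{R\in\mathcal{U}_{n,d}} b_Ry_R=0$. Define $\mathcal{L}_d(\mathcal{Q})\subseteq\mathbb{F}_2^{N\times N}$ as the set of matrices $A$ with rows and columns indexed by $\mathcal{U}_{n,d}$ satisfying (1) the equal-union constraints $A_{S,T}=A_{S',T'}$ whenever $S\cup T=S'\cup T'$, and (2) for every equation of $\mathcal{Q}$, the linear constraint $\sum_{S,T} c_{S,T}A_{S,T}+\sum_R b_RA_{R,R}=0$. The vectors $u^{(i)}$ are viewed as assignments $y_U\mapsto u^{(i)}_U$; their aggregate assignment is the coordinate-wise sum $\sum_i u^{(i)}$. *)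

From HB Require Import structures.
From mathcomp Require Import all_boot all_order all_algebra.
Set Implicit Arguments. Unset Strict Implicit. Unset Printing Implicit Defensive.
Import GRing.Theory.
Local Open Scope ring_scope.

Definition Uidx (n d : nat) : finType :=
  {S : {set 'I_n.+1} | (0 < #|S| <= d)%N}.

(* N = |U_{n,d}| ; matrices/vectors are indexed by 'I_N through enum_rank. *)
Notation Nsz n d := #|Uidx n d|.

Definition ent (n d : nat) (A : 'M['F_2]_(Nsz n d)) (S T : Uidx n d) : 'F_2 :=
  A (enum_rank S) (enum_rank T).

(* A system Q of m quadratic equations with zero constant term:
   equation k is  sum_{S,T} c k S T y_S y_T + sum_R b k R y_R = 0.
   L_d(Q): matrices satisfying the equal-union constraints and the
   linearized equations. *)
Definition in_Ld (n d m : nat) (c : 'I_m -> Uidx n d -> Uidx n d -> 'F_2)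
    (b : 'I_m -> Uidx n d -> 'F_2) (A : 'M['F_2]_(Nsz n d)) : Prop :=
  (forall S T S' T' : Uidx n d, val S :|: val T = val S' :|: val T' ->
      ent A S T = ent A S' T') /\
  (forall k : 'I_m,
      \sum_(S : Uidx n d) \sum_(T : Uidx n d) c k S T * ent A S T
      + \sum_(R : Uidx n d) b k R * ent A R R = 0).

From mathcomp Require Import all_boot all_order all_algebra.
From mathcomp Require Import zify.
Set Implicit Arguments. Unset Strict Implicit. Unset Printing Implicit Defensive.
Import GRing.Theory.
Local Open Scope ring_scope.

(* Over F_2 the diagonal entry A_{U,U} = sum_i (u_U^(i))^2 = sum_i u_U^(i) is
   the aggregate assignment at U, so A has zero diagonal.  Choose W of minimal
   size among the unions S ∪ T with A_{S,T} != 0.  By the equal-union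
   constraints and minimality, A_{S,T} = [S ∪ T = W] whenever S ∪ T ⊆ W; the
   zero diagonal forces d < |W| <= 2d.  Rows indexed by the (|W|/2)-subsets X
   of W and columns indexed by their complements W \ X then form an identity
   submatrix of size C(|W|, |W|/2) >= C(d+1, (d+1)/2). *)

Lemma F2_cases (x : 'F_2) : x = 0 \/ x = 1.
Proof. by case: x => [[|[|k]] // lt_k2]; [left | right]; apply: val_inj. Qed.

Lemma mulF2_id (x : 'F_2) : x * x = x.
Proof. by case: (F2_cases x) => ->; rewrite ?mul0r ?mul1r. Qed.

Lemma leq_bin_halfS k : ('C(k, k./2) <= 'C(k.+1, k.+1./2))%N.
Proof.
rewrite -uphalfE uphalf_half; case: (odd k) => /=.
  by rewrite add1n binS leq_addl.
by rewrite add0n leq_bin2l.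
Qed.

Lemma leq_bin_half m k : (m <= k)%N -> ('C(m, m./2) <= 'C(k, k./2))%N.
Proof.
elim: k => [|k IHk]; first by rewrite leqn0 => /eqP ->.
rewrite leq_eqVlt => /orP[/eqP -> // | /IHk le_mk].
exact: leq_trans le_mk (leq_bin_halfS k).
Qed.

Lemma mxrank_mxsub (F : fieldType) m n m' n' (f : 'I_m' -> 'I_m)
    (g : 'I_n' -> 'I_n) (A : 'M[F]_(m, n)) :
  (\rank (mxsub f g A) <= \rank A)%N.
Proof.
rewrite mxsubrc (leq_trans (mxrankS (rowsub_sub f _))) //.
have -> : mxsub id g A = (rowsub g A^T)^T by apply/matrixP => i j; rewrite !mxE.
by rewrite !mxrank_tr (leq_trans (mxrankS (rowsub_sub g _))) ?mxrank_tr.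
Qed.

Lemma setU_setD_eq (T : finType) (W Y Z : {set T}) :
  Y \subset W -> Z \subset W -> (Y :|: (W :\: Z) == W) = (Z \subset Y).
Proof.
move=> /subsetP sYW /subsetP sZW; apply/eqP/subsetP => [YZW x Zx | sZY].
  by have := sZW x Zx; rewrite -{1}YZW !inE Zx orbF.
apply/setP => x; rewrite !inE.
case Yx: (x \in Y); first by rewrite sYW.
by case Zx: (x \in Z); rewrite /= ?andbT //; have := sZY x Zx; rewrite Yx.
Qed.

Lemma diag_sum_outer_F2 N t (u : 'I_t -> 'cV['F_2]_N) j :
  (\sum_(i < t) u i *m (u i)^T) j j = \sum_(i < t) u i j 0.
Proof.
rewrite summxE; apply: eq_bigr => i _.
by rewrite mxE big_ord1 mxE mulF2_id.
Qed.

Section MinimalUnion.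

Variables n d : nat.
Variable A : 'M['F_2]_(Nsz n d).

Definition union_supp (W : {set 'I_n.+1}) : bool :=
  [exists S : Uidx n d, exists T : Uidx n d,
     (val S :|: val T == W) && (ent A S T != 0)].

Lemma union_supp_exists : A != 0 -> exists W, union_supp W.
Proof.
move=> A_neq0.
case: (pickP (fun ij => A ij.1 ij.2 != 0)) => [[i j] /= Aij | A0]; last first.
  case/eqP: A_neq0; apply/matrixP => i j.
  by rewrite mxE; apply/eqP/negbFE/(A0 (i, j)).
exists (val (enum_val i) :|: val (enum_val j)).
by apply/existsP; exists (enum_val i); apply/existsP; exists (enum_val j);
  rewrite /ent !enum_valK eqxx.
Qed.

Lemma card_union_supp_le W : union_supp W -> (#|W| <= d + d)%N.
Proof.
case/existsP=> S /existsP[T /andP[/eqP <- _]].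
have [/andP[_ le_Sd] /andP[_ le_Td]] := (valP S, valP T).
exact: leq_trans (leq_card_setU _ _) (leq_add le_Sd le_Td).
Qed.

Hypothesis ent_union : forall S T S' T' : Uidx n d,
  val S :|: val T = val S' :|: val T' -> ent A S T = ent A S' T'.

Lemma card_union_supp_gt W :
  (forall U, ent A U U = 0) -> union_supp W -> (d < #|W|)%N.
Proof.
move=> diag0 /existsP[S /existsP[T /andP[/eqP SUT_W AST]]].
rewrite ltnNge; apply/negP => le_Wd.
have W_gt0 : (0 < #|W|)%N.
  have /andP[S_gt0 _] := valP S.
  by rewrite -SUT_W (leq_trans S_gt0 (subset_leq_card (subsetUl _ _))).
pose UW : Uidx n d := Sub W (introT andP (conj W_gt0 le_Wd)).
by move: AST; rewrite (ent_union (S' := UW) (T' := UW)) ?diag0 ?eqxx //= setUid.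
Qed.

Section Minimal.

Variable W : {set 'I_n.+1}.
Hypothesis suppW : union_supp W.
Hypothesis minW : forall W', union_supp W' -> (#|W| <= #|W'|)%N.

Lemma ent_min_union_supp S T :
  val S :|: val T \subset W -> ent A S T = (val S :|: val T == W)%:R.
Proof.
move=> sSTW; case/existsP: suppW => S0 /existsP[T0 /andP[/eqP S0T0_W AST0]].
case: eqP => [SUT_W | SUT_neqW].
  rewrite (ent_union (S' := S0) (T' := T0)) ?SUT_W //.
  by case: (F2_cases (ent A S0 T0)) AST0 => ->.
case: (F2_cases (ent A S T)) => // AST; exfalso.
have suppST : union_supp (val S :|: val T).
  by apply/existsP; exists S; apply/existsP; exists T; rewrite eqxx AST oner_neq0.
move: (minW suppST); rewrite leqNgt => /negP; apply; apply: proper_card.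
by rewrite properEneq sSTW andbT; apply/eqP.
Qed.

Lemma rank_min_union_supp s :
  (0 < s <= d)%N -> (0 < #|W| - s <= d)%N -> ('C(#|W|, s) <= \rank A)%N.
Proof.
move=> s_bnd Ws_bnd; have [S0 _] := existsP suppW.
pose P := [set X : {set 'I_n.+1} | X \subset W & #|X| == s].
pose X (i : 'I_#|P|) : {set 'I_n.+1} := enum_val i.
have XP i : X i \subset W /\ #|X i| = s.
  by have := enum_valP i; rewrite inE => /andP[? /eqP].
have valX i : val (insubd S0 (X i)) = X i.
  by case: (XP i) => _ cardX; rewrite insubdK // unfold_in /= cardX.
have valWX i : val (insubd S0 (W :\: X i)) = W :\: X i.
  case: (XP i) => sXW cardX.
  by rewrite insubdK // unfold_in /= cardsD (setIidPr sXW) cardX.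
pose f i := enum_rank (insubd S0 (X i)).
pose g i := enum_rank (insubd S0 (W :\: X i)).
have -> : 'C(#|W|, s) = #|P| by rewrite cards_draws.
suff sub_id : mxsub f g A = 1%:M.
  by rewrite -(mxrank1 'F_2 #|P|) -sub_id mxrank_mxsub.
apply/matrixP => i j; rewrite !mxE.
have [[sXiW cardXi] [sXjW cardXj]] := (XP i, XP j).
rewrite -[A _ _]/(ent A _ _) ent_min_union_supp valX valWX; last first.
  by rewrite subUset sXiW subsetDl.
rewrite setU_setD_eq //; congr (nat_of_bool _)%:R.
apply/idP/eqP => [sXji | -> //].
apply/enum_val_inj/eqP.
by rewrite eq_sym eqEcard sXji -/(X i) -/(X j) cardXi cardXj leqnn.
Qed.

End Minimal.

End MinimalUnion.

Theorem lemma3p10 (n d m : nat) (hn : (1 <= n)%N) (hd : (1 <= d)%N)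
    (c : 'I_m -> Uidx n d -> Uidx n d -> 'F_2) (b : 'I_m -> Uidx n d -> 'F_2)
    (A : 'M['F_2]_(Nsz n d)) (t : nat) (u : 'I_t -> 'cV['F_2]_(Nsz n d)) :
  in_Ld c b A -> A != 0 ->
  A = \sum_(i < t) (u i *m (u i)^T) ->
  (forall U : Uidx n d, \sum_(i < t) u i (enum_rank U) 0 = 0) ->
  ('C(d.+1, (d.+1)./2) <= \rank A)%N.
Proof.
move=> [ent_union _] A_neq0 A_def agg0.
have diag0 U : ent A U U = 0 by rewrite /ent A_def diag_sum_outer_F2 agg0.
have [W0 suppW0] := union_supp_exists A_neq0.
have [W suppW minW] := arg_minnP (fun W : {set 'I_n.+1} => #|W|) suppW0.
have gt_Wd := card_union_supp_gt ent_union diag0 suppW.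
have le_W2d := card_union_supp_le suppW.
apply: leq_trans (leq_bin_half gt_Wd) _.
by apply: (rank_min_union_supp ent_union suppW minW); lia.
Qed.
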